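(* Let $b\ge 2$ be an integer, let $G$ be a $b$-dc-semigroup, and suppose $I_b(j,l)\subseteq G$ for some $j\in\mathbf{N}$ and $l\in\mathbf{N}^*$. Let $d=\lceil j/l\rceil$. \begin{enumerate} \item If $d\ge 1$, then $I_b(dj,+\infty)\subseteq G$. \item If $d=0$, $l\ge 2$ and $b=2$, then $G=\mathbf{N}^*$. \item If $d=0$ and $b>2$, then $G=\mathbf{N}^*$. \end{enumerate}
   Context: $\mathbf{N}=\{0,1,2,\dots\}$ and $\mathbf{N}^*=\mathbf{N}\setminus\{0\}$. For an integer $b\ge2$, a $b$-dc-semigroup is a subsemigroup $G$ of the multiplicative semigroup $(\mathbf{N}^*,\cdot)$ which is closed with respect to the number of base-$b$ digits: if $x\in G$ and $b^{n-1}\le x<b^n$ then $\{y\in\mathbf{N}: b^{n-1}\le y<b^n\}\subseteq G$. For $i\in\mathbf{N}$ and $j\in\mathbf{N}^*$, $I_b(i,j)=\{x\in\mathbf{N}: b^i\le x<b^{i+j}\}$ and $I_b(i,+\infty)=\{x\in\mathbf{N}: x\ge b^i\}$. *)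

From mathcomp Require Import all_boot.
Set Implicit Arguments. Unset Strict Implicit. Unset Printing Implicit Defensive.

(* G is a subsemigroup of (N^*, * ) closed w.r.t. the number of base-b digits:
   if x \in G has n base-b digits (b^(n-1) <= x < b^n) then every y with
   n base-b digits is in G. *)
Definition dc_semigroup (b : nat) (G : nat -> Prop) : Prop :=
  [/\ (forall x, G x -> 0 < x),
      (forall x y, G x -> G y -> G (x * y)) &
      (forall x y n, G x -> b ^ n.-1 <= x < b ^ n ->
                     b ^ n.-1 <= y < b ^ n -> G y)].

Definition Ib (b i j : nat) (x : nat) : Prop := b ^ i <= x < b ^ (i + j).

Definition Ib_inf (b i : nat) (x : nat) : Prop := b ^ i <= x.

Definition ceil_div (j l : nat) : nat := (j + l - 1) %/ l.

From mathcomp Require Import all_boot.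
From mathcomp Require Import zify.
Set Implicit Arguments.

(* Membership in G only depends on the exponent class [b^e, b^(e+1)) of a
   number, so it suffices to know which classes are contained in G ("full").
   The product of the least elements of classes e and f lies in class e + f,
   and (for e, f >= 1) that of the greatest elements in class e + f + 1.  So if
   the classes in [j, j + l) are full, so are those in [k j, k (j + l)) for
   every k >= 1, and for k >= d these windows overlap, covering [d j, oo).
   When j = 0, I_b(0, l) contains 1 and (if b^l > 2) also 2, and multiplying
   the greatest element of class e by 2 lands in class e + 1. *)

Section DigitClasses.

Variables (b : nat) (G : nat -> Prop).
Hypothesis b_ge2 : 2 <= b.
Hypothesis dcG : dc_semigroup b G.

Definition digits_full (e : nat) : Prop :=
  forall y, b ^ e <= y < b ^ e.+1 -> G y.

Lemma digits_fullP e x : G x -> b ^ e <= x < b ^ e.+1 -> digits_full e.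
Proof. by case: dcG => _ _ G_dc Gx hx y; exact: (G_dc x y e.+1). Qed.

Lemma digits_full_mem e : digits_full e -> G (b ^ e).
Proof. by move=> Fe; apply: Fe; rewrite leqnn /= ltn_exp2l. Qed.

Lemma digits_full_mem_last e : digits_full e -> G (b ^ e.+1).-1.
Proof.
have pos : 0 < b ^ e by rewrite expn_gt0; lia.
move=> Fe; apply: Fe; rewrite expnS; nia.
Qed.

Lemma digits_fullD e f :
  digits_full e -> digits_full f -> digits_full (e + f).
Proof.
case: dcG => _ G_mul _ Fe Ff.
apply: (digits_fullP _ (G_mul _ _ (digits_full_mem Fe) (digits_full_mem Ff))).
by rewrite -expnD leqnn /= ltn_exp2l.
Qed.

Lemma digits_fullDS e f : 0 < e -> 0 < f ->
  digits_full e -> digits_full f -> digits_full (e + f).+1.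
Proof.
case: dcG => _ G_mul _ e_gt0 f_gt0 Fe Ff.
have Gxy := G_mul _ _ (digits_full_mem_last Fe) (digits_full_mem_last Ff).
apply: (digits_fullP _ Gxy).
have ue : b <= b ^ e by rewrite -{1}(expn1 b) leq_exp2l.
have uf : b <= b ^ f by rewrite -{1}(expn1 b) leq_exp2l.
rewrite !expnS expnD; move: (b ^ e) (b ^ f) ue uf => u v ue uf.
(* (b u - 1)(b v - 1) >= b u v  as soon as u, v >= b >= 2 *)
nia.
Qed.

Lemma digits_full_mul2 e : G 2 -> digits_full e -> digits_full e.+1.
Proof.
case: dcG => _ G_mul _ G2 Fe.
apply: (digits_fullP _ (G_mul _ _ G2 (digits_full_mem_last Fe))).
have pos : 0 < b ^ e by rewrite expn_gt0; lia.
by rewrite !expnS; nia.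
Qed.

Lemma mem_digits_full x : 0 < x -> digits_full (trunc_log b x) -> G x.
Proof. by move=> x_gt0 F; apply: F; exact: trunc_log_bounds. Qed.

Lemma digits_full_Ib {j l} :
  (forall x, Ib b j l x -> G x) -> forall e, j <= e < j + l -> digits_full e.
Proof.
move=> IbG e /andP[je el] y /andP[ey yb]; apply: IbG; apply/andP; split.
  by apply: leq_trans ey; rewrite leq_exp2l.
by apply: leq_trans yb _; rewrite leq_exp2l.
Qed.

Lemma digits_full_window j l k : 0 < j -> 0 < k ->
  (forall e, j <= e < j + l -> digits_full e) ->
  forall e, k * j <= e < k * (j + l) -> digits_full e.
Proof.
move=> j_gt0 + base; elim: k => [//|[|k] IH] _ e he; first by apply: base; lia.
have {}IH := IH isT.
case: (ltnP (e - j) (k.+1 * (j + l))) => hc.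
  have -> : e = (e - j) + j by lia.
  by apply: digits_fullD; [apply: IH | apply: base]; lia.
have -> : e = ((k.+1 * (j + l)).-1 + (e - k.+1 * (j + l))).+1 by lia.
by apply: digits_fullDS; [lia | lia | apply: IH | apply: base]; lia.
Qed.

Lemma Ib_inf_sub_of_Ib j l :
  0 < j -> 0 < l -> (forall x, Ib b j l x -> G x) ->
  forall x, Ib_inf b (ceil_div j l * j) x -> G x.
Proof.
rewrite /ceil_div => j_gt0 l_gt0 IbG x hx.
set d := (j + l - 1) %/ l in hx.
have dl : j <= d * l.
  by have := divn_eq (j + l - 1) l; have := ltn_pmod (j + l - 1) l_gt0; lia.
have x_gt0 : 0 < x by apply: leq_trans hx; rewrite expn_gt0; lia.
apply: mem_digits_full => //.
have [_ hi] := andP (trunc_log_bounds b_ge2 x_gt0).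
set e := trunc_log b x in hi *.
have de : d * j <= e.
  by rewrite -ltnS -(ltn_exp2l _ _ b_ge2); exact: leq_ltn_trans hi.
have dk : d <= e %/ j by rewrite leq_divRL.
apply: (@digits_full_window j l (e %/ j)) => //.
- by apply: leq_trans dk; lia.
- exact: digits_full_Ib IbG.
- by have := divn_eq e j; have := ltn_pmod e j_gt0; nia.
Qed.

Lemma mem_all_of_Ib0 l :
  2 < b ^ l -> (forall x, Ib b 0 l x -> G x) -> forall x, G x <-> 0 < x.
Proof.
move=> bl IbG x; split; first by case: dcG => G_pos _ _; exact: G_pos.
move=> x_gt0; apply: mem_digits_full => //.
have G2 : G 2 by apply: IbG; rewrite /Ib expn0 add0n.
elim: (trunc_log b x) => [|e]; last exact: digits_full_mul2.
by apply: (digits_full_Ib IbG); rewrite add0n -(ltn_exp2l _ _ b_ge2); lia.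
Qed.

End DigitClasses.

Lemma ceil_div_eq0 {j l} : 0 < l -> ceil_div j l = 0 -> j = 0.
Proof.
rewrite /ceil_div => l_gt0 hd.
by have := divn_eq (j + l - 1) l; have := ltn_pmod (j + l - 1) l_gt0; lia.
Qed.

Theorem lemma2p3 (b : nat) (G : nat -> Prop) (j l : nat) :
  2 <= b -> dc_semigroup b G -> 0 < l ->
  (forall x, Ib b j l x -> G x) ->
  [/\ (1 <= ceil_div j l ->
         forall x, Ib_inf b (ceil_div j l * j) x -> G x),
      (ceil_div j l = 0 -> 2 <= l -> b = 2 ->
         forall x, G x <-> 0 < x) &
      (ceil_div j l = 0 -> 2 < b ->
         forall x, G x <-> 0 < x)].
Proof.
move=> b_ge2 dcG l_gt0 IbG; split.
- move=> d_ge1; apply: Ib_inf_sub_of_Ib => //.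
  by case: (posnP j) d_ge1 => // ->; rewrite /ceil_div add0n divn_small //; lia.
- move=> /(ceil_div_eq0 l_gt0) j0 l_ge2 b2; subst j b.
  apply: (mem_all_of_Ib0 b_ge2 dcG _ IbG).
  by apply: (@leq_trans (2 ^ 2)); rewrite // leq_exp2l.
- move=> /(ceil_div_eq0 l_gt0) j0 b_gt2; subst j.
  apply: (mem_all_of_Ib0 b_ge2 dcG _ IbG).
  by apply: leq_trans b_gt2 _; rewrite -{1}(expn1 b) leq_exp2l //; lia.
Qed.
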